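(* Let $N\ge1$ and define $$p_k=\begin{cases}\tilde n_0,&k=0,\\ \sum_{l=0}^{k}\tilde n_l-k\,\tilde n_{k+1},&k=1,\dots,N-1,\\ -\infty,&k=N.\end{cases}$$ Then for every $k\in\{1,\dots,N\}$ and every $r\in[0,\tilde n_0]$ with $r\ge p_k$, $$d_{(n_0,\dots,n_N)}(r)=d_{(\tilde n_0,\dots,\tilde n_k)}(r).$$
   Context: For a vector $\mathbf n=(n_0,\dots,n_N)$ of positive integers ($N\ge1$), let $\tilde n_0\le\cdots\le\tilde n_N$ be its nondecreasing rearrangement, $n_{\min}=\tilde n_0$, $c_i=1-i+\min_{k'=1,\dots,N}\lfloor(\sum_{l=0}^{k'}\tilde n_l-i)/k'\rfloor$ for $i=1,\dots,n_{\min}$, and $d_{\mathbf n}(k)=\sum_{i=k+1}^{n_{\min}}c_i$ for integers $0\le k\le n_{\min}$; $d_{\mathbf n}(r)$ for real $r\in[0,n_{\min}]$ is the piecewise-linear interpolation of these points. This is the diversity-multiplexing tradeoff of the $(n_0,\dots,n_N)$ Rayleigh product channel $\mathbf y=\sqrt{\mathsf{SNR}/(n_1\cdots n_N)}\mathbf H_1\cdots\mathbf H_N\mathbf x+\mathbf z$ with independent i.i.d. $\mathcal{CN}(0,1)$ matrices $\mathbf H_i\in\mathbb C^{n_{i-1}\times n_i}$. *)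

From HB Require Import structures.
From mathcomp Require Import all_boot all_order all_algebra.
Set Implicit Arguments. Unset Strict Implicit. Unset Printing Implicit Defensive.
Import Order.TTheory GRing.Theory Num.Theory.

(* A channel dimension vector n = (n_0,...,n_N) is a seq nat of size N+1. *)

Definition ntil (s : seq nat) (l : nat) : nat := nth 0 (sort leq s) l.

(* N, the number of matrices *)
Definition NN (s : seq nat) : nat := (size s).-1.

Definition nmin (s : seq nat) : nat := ntil s 0.

(* floor((\sum_{l=0}^{k'} \tilde n_l - i) / k'); the numerator is >= 0 for i <= n_min *)
Definition cterm (s : seq nat) (i k' : nat) : nat :=
  ((\sum_(0 <= l < k'.+1) ntil s l) - i) %/ k'.

Definition cmin (s : seq nat) (i : nat) : nat :=
  \big[minn/cterm s i 1]_(1 <= k' < (NN s).+1) cterm s i k'.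

Definition cc (s : seq nat) (i : nat) : int :=
  (1 - (i : int) + (cmin s i : int))%R.

Definition dint (s : seq nat) (k : nat) : int :=
  (\sum_(k.+1 <= i < (nmin s).+1) cc s i)%R.

Local Open Scope ring_scope.

Definition dreal (R : archiRealFieldType) (s : seq nat) (r : R) : R :=
  let k := Num.truncn r in
  (k.+1%:R - r) * (dint s k)%:~R + (r - k%:R) * (dint s k.+1)%:~R.

(* p_k for k = 1..N-1 (p_N = -infinity is handled in the statement) *)
Definition pk (s : seq nat) (k : nat) : int :=
  (\sum_(0 <= l < k.+1) (ntil s l : int)) - (k : int) * (ntil s k.+1 : int).

From HB Require Import structures.
From mathcomp Require Import all_boot all_order all_algebra.
Import Order.TTheory GRing.Theory Num.Theory.

(* Let t be the prefix (ñ_0, ..., ñ_k) of the sorted dimension vector n, with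
   1 <= k <= N.  Since t is already sorted, its rearrangement agrees with that
   of n on the first k+1 entries, so t has the same n_min and the floor terms
   cterm t i k' = floor((ñ_0 + ... + ñ_k' - i) / k') coincide with those of n
   for k' <= k.  Hence c_i(n) = c_i(t) as soon as the minimum over k' in 1..N
   defining c_i(n) is already attained in 1..k.  This holds when i >= p_k:
   the bound ñ_0 + ... + ñ_k <= i + k ñ_(k+1) propagates from k to every
   k' >= k (because ñ is nondecreasing), and each such bound makes the floor
   term nondecreasing from k' to k'+1.
   Finally d(r) only involves d(⌊r⌋) and d(⌊r⌋+1), i.e. only the c_i with
   i > ⌊r⌋ >= p_k, which gives d_n(r) = d_t(r). *)

Local Notation psum s j := (\sum_(0 <= l < j.+1) ntil s l).

(* [pk_below s i j] says i >= p_j, written without subtraction in nat. *)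
Definition pk_below (s : seq nat) (i j : nat) : bool :=
  psum s j <= i + j * ntil s j.+1.

Section Monotonicity.

Variable s : seq nat.

Lemma ntil_mono a b : a <= b -> b < size s -> ntil s a <= ntil s b.
Proof.
move=> hab hb; rewrite /ntil.
apply: (sorted_leq_nth leq_trans leqnn 0 (sort_sorted leq_total s)) => //.
  by rewrite inE size_sort (leq_ltn_trans hab hb).
by rewrite inE size_sort.
Qed.

(* Needed so that subtracting i <= ñ_0 from a partial sum is exact. *)
Lemma ntil0_le_psum j : ntil s 0 <= psum s j.
Proof. by rewrite big_ltn // leq_addr. Qed.

Lemma pk_below_succ i j : j.+2 < size s -> pk_below s i j -> pk_below s i j.+1.
Proof.
move=> hj hij; rewrite /pk_below big_nat_recr //= mulSn addnCA addnC.
apply: leq_add; first exact: ntil_mono.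
apply: leq_trans hij _; rewrite leq_add2l leq_mul2l ntil_mono ?orbT //; exact: ltnW.
Qed.

(* Under i >= p_j, the floor term does not decrease from j to j+1:
   with a = ñ_0 + ... + ñ_j - i <= j b and b = ñ_(j+1),
   we get a/j <= (a+b)/(j+1). *)
Lemma cterm_succ i j : 0 < j -> i <= ntil s 0 -> pk_below s i j ->
  cterm s i j <= cterm s i j.+1.
Proof.
move=> hj hi hij; rewrite /cterm (@big_nat_recr _ _ _ j.+1) //=.
rewrite -addnBAC; last first.
  exact: leq_trans hi (ntil0_le_psum j).
set a := psum s j - i; set b := ntil s j.+1.
have ha : a <= j * b by rewrite /a leq_subLR.
have hq : a %/ j <= b.
  by rewrite -(leq_pmul2l hj) mulnC; apply: leq_trans (leq_divM a j) ha.
by rewrite leq_divRL // mulnS addnC; apply: leq_add => //; exact: leq_divM.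
Qed.

End Monotonicity.

Section IntegerReading.

Local Open Scope ring_scope.

Lemma pk_belowE s i j : pk_below s i j = (pk s j <= i%:Z).
Proof.
rewrite /pk /pk_below -(big_morph Posz PoszD (erefl (Posz 0))).
by rewrite lerBlDr -PoszM -PoszD lez_nat.
Qed.

Lemma pk_below_real (R : archiRealFieldType) s i j (r : R) :
  (pk s j)%:~R <= r -> (Num.truncn r < i)%N -> pk_below s i j.
Proof.
move=> hpr hi; rewrite pk_belowE; apply/ltW.
rewrite -(ltr_int R); apply: (le_lt_trans hpr); apply: lt_le_trans (truncnS_gt r) _.
by rewrite [(i%:Z)%:~R]/(i%:R) ler_nat.
Qed.

End IntegerReading.

Section SortedPrefix.

Variables (n : seq nat) (N k : nat).
Hypotheses (hsize : size n = N.+1) (hk1 : 0 < k) (hkN : k <= N).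

Local Notation t := (take k.+1 (sort leq n)).

Lemma sort_prefix : sort leq t = t.
Proof.
apply: sorted_sort; first exact: leq_trans.
by apply: take_sorted; apply: sort_sorted; exact: leq_total.
Qed.

Lemma ntil_prefix l : l <= k -> ntil t l = ntil n l.
Proof. by move=> hl; rewrite /ntil sort_prefix nth_take. Qed.

Lemma NN_prefix : NN t = k.
Proof. by rewrite /NN size_takel // size_sort hsize. Qed.

Lemma nmin_prefix : nmin t = nmin n.
Proof. exact: ntil_prefix. Qed.

Lemma cterm_prefix i j : j <= k -> cterm t i j = cterm n i j.
Proof.
move=> hj; rewrite /cterm; congr ((_ - _) %/ _).
by apply: eq_big_nat => l /andP [_ hl]; rewrite ntil_prefix // -ltnS (leq_trans hl).
Qed.

Section AbovePk.

Variable i : nat.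
Hypotheses (hi : i <= ntil n 0) (hpk : k < N -> pk_below n i k).

Lemma pk_below_tail j : k <= j -> j < N -> pk_below n i j.
Proof.
elim: j => [|j IH]; first by rewrite leqNgt hk1.
rewrite leq_eqVlt ltnS => /orP [/eqP <- | hkj] hjN; first exact: hpk.
by apply: pk_below_succ; [rewrite hsize | apply: IH => //; exact: ltnW].
Qed.

Lemma cterm_tail j : k <= j <= N -> cterm n i k <= cterm n i j.
Proof.
elim: j => [|j IH]; first by rewrite leqNgt hk1.
case/andP; rewrite leq_eqVlt => /orP [/eqP -> // | hkj] hjN.
apply: leq_trans (IH _) _; first by rewrite -ltnS hkj ltnW.
by apply: cterm_succ; rewrite ?(leq_trans hk1) ?pk_below_tail.
Qed.

Lemma cmin_prefix : cmin n i = cmin t i.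
Proof.
rewrite /cmin NN_prefix /NN hsize -!minEnat.
have cterm1 : cterm t i 1 = cterm n i 1 by rewrite cterm_prefix.
apply/eqP; rewrite eqn_leq; apply/andP; split; rewrite [X in _ <= X]big_seq.
- apply: (@le_bigmin _ nat) => [|j]; first by rewrite cterm1 (@bigmin_le_id _ nat).
  rewrite mem_index_iota ltnS => /andP [j1 jk]; rewrite cterm_prefix //.
  apply: (@ge_bigmin_seq _ nat) => //.
  by rewrite mem_index_iota j1 ltnS (leq_trans jk hkN).
- apply: (@le_bigmin _ nat) => [|j]; first by rewrite -cterm1 (@bigmin_le_id _ nat).
  rewrite mem_index_iota ltnS => /andP [j1 jN].
  have [jk | kj] := leqP j k.
    rewrite -cterm_prefix //; apply: (@ge_bigmin_seq _ nat) => //.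
    by rewrite mem_index_iota j1.
  apply: (leq_trans _ (@cterm_tail j _)); last by rewrite jN ltnW.
  rewrite -cterm_prefix //; apply: (@ge_bigmin_seq _ nat) => //.
  by rewrite mem_index_iota hk1 /=.
Qed.

End AbovePk.

End SortedPrefix.

Lemma dreal_local (R : archiRealFieldType) (s s' : seq nat) (r : R) :
  nmin s = nmin s' ->
  (forall i, Num.truncn r < i <= nmin s -> cmin s i = cmin s' i) ->
  dreal s r = dreal s' r.
Proof.
move=> hmin hc.
have hd j : Num.truncn r <= j -> dint s j = dint s' j.
  move=> hj; rewrite /dint -hmin; apply: eq_big_nat => i /andP [hji hi].
  by rewrite /cc hc // (leq_ltn_trans hj hji) -ltnS.
by rewrite /dreal hd // hd.
Qed.

Local Open Scope ring_scope.

Theorem corollary2 (R : archiRealFieldType) (n : seq nat) (N : nat)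
  (hN : (1 <= N)%N) (hsize : size n = N.+1) (hpos : all (fun x => 0 < x)%N n)
  (k : nat) (hk1 : (1 <= k)%N) (hkN : (k <= N)%N) (r : R)
  (hr0 : 0 <= r) (hr1 : r <= (ntil n 0)%:R)
  (hp : (k < N)%N -> (pk n k)%:~R <= r) :
  dreal n r = dreal (take k.+1 (sort leq n)) r.
Proof.
apply: dreal_local; first by rewrite nmin_prefix.
(* every index i > ⌊r⌋ satisfies i >= p_k, so c_i(n) = c_i(t) *)
move=> i /andP [hri hin]; apply: (@cmin_prefix n N k hsize hk1 hkN i hin) => hkN'.
exact: pk_below_real (hp hkN') hri.
Qed.
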